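(* Let $k\ge2$ and $\ell\ge1$. The length of the longest strictly decreasing subsequence of the permutation $Z_k(\ell)$ is $(k+1)k^{\ell/2-1}-1$ if $\ell$ is even, and $2k^{(\ell-1)/2}-1$ if $\ell$ is odd.
   Context: $Z_k(\ell)$ is the permutation of $\{1,\dots,k^\ell\}$ whose $p$-th entry (for $p=1,\dots,k^\ell$) is $1+\mathrm{rev}_{k,\ell}(p-1)$, where $\mathrm{rev}_{k,\ell}(x)$ is the integer whose $\ell$-digit (zero-padded) base-$k$ representation is the reversal of that of $x$. Equivalently, $Z_k(\ell)$ is the stable configuration (read left to right on layer $\ell+1$) of labeled chip-firing on the infinite rooted directed $k$-ary tree starting from chips $1,\dots,k^\ell$ at the root, under the strategy where each vertex holding chips $c_1<\cdots<c_{kq}$ fires the consecutive $k$-tuples $(c_1,\dots,c_k),(c_{k+1},\dots,c_{2k}),\dots$; in a firing the $i$-th smallest chip of the fired $k$-tuple goes to the $i$-th leftmost child. *)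

From mathcomp Require Import all_boot.
Set Implicit Arguments. Unset Strict Implicit. Unset Printing Implicit Defensive.

Definition digit (k i x : nat) : nat := (x %/ k ^ i) %% k.

(* rev_{k,l}(x): integer whose l-digit (zero-padded) base-k representation is
   the reversal of that of x:  digit i of x becomes digit (l-1-i). *)
Definition rev_digits (k l x : nat) : nat :=
  \sum_(i < l) digit k i x * k ^ (l.-1 - i).

(* Z_k(l) as the sequence of its entries: p-th entry (p = 1..k^l) is
   1 + rev_{k,l}(p-1). *)
Definition Zperm (k l : nat) : seq nat :=
  [seq (rev_digits k l x).+1 | x <- iota 0 (k ^ l)].

Definition is_dec_subseq (t s : seq nat) : bool :=
  subseq t s && sorted (fun a b => b < a) t.

Definition lds_length (s : seq nat) (L : nat) : Prop :=
  (exists t, is_dec_subseq t s /\ size t = L) /\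
  (forall t, is_dec_subseq t s -> size t <= L).

From mathcomp Require Import all_boot zify.
Set Implicit Arguments. Unset Strict Implicit. Unset Printing Implicit Defensive.

(* Write l = A + 1 + B with B <= A <= B + 1 and cut a position into its high
   [A] digits h, one middle digit and its low [B] digits r.  Digit reversal
   swaps the roles of h and r, so along a decreasing subsequence h weakly
   increases, the reversal of r weakly decreases, and they never both stay
   constant: h - rev r increases strictly, inside an interval of
   k^A + k^B - 1 values.  Explicit staircases, in which the middle digit
   absorbs the alternation (and, for even l, a carry in h links the blocks),
   attain this bound. *)

Lemma divnMD_small d q r : r < d -> (q * d + r) %/ d = q.
Proof.
by move=> lt_rd; rewrite divnMDl ?divn_small ?addn0 //; apply: leq_ltn_trans lt_rd.
Qed.

Lemma modnMD_small d q r : r < d -> (q * d + r) %% d = r.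
Proof. by move=> lt_rd; rewrite modnMDl modn_small. Qed.

Lemma ltn_addM_digit a c K k : a < K -> c < k -> a + K * c < K * k.
Proof.
move=> lt_aK lt_ck; apply: (@leq_trans (K * c.+1)).
  by rewrite mulnS ltn_add2r.
by rewrite leq_mul2l lt_ck orbT.
Qed.

Lemma sorted_subset_subseq (T : eqType) (leT : rel T) (s1 s2 : seq T) :
  transitive leT -> irreflexive leT -> sorted leT s1 -> sorted leT s2 ->
  {subset s1 <= s2} -> subseq s1 s2.
Proof.
move=> leT_tr leT_irr sorted_s1 sorted_s2 sub12.
rewrite (irr_sorted_eq leT_tr leT_irr sorted_s1 (sorted_filter leT_tr (mem s1) sorted_s2)).
  exact: filter_subseq.
by move=> x; rewrite mem_filter andb_idr //; apply: sub12.
Qed.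

Lemma sorted_mkseq_blocks (T : Type) (r : rel T) d N (G : nat -> nat -> T) : 0 < d ->
  (forall j i, i.+1 < d -> (j * d + i).+1 < N -> r (G j i) (G j i.+1)) ->
  (forall j, j.+1 * d < N -> r (G j d.-1) (G j.+1 0)) ->
  sorted r (mkseq (fun t => G (t %/ d) (t %% d)) N).
Proof.
move=> d_gt0 step_in step_out; apply/(sortedP (G 0 0)) => t; rewrite size_mkseq => lt_tN.
rewrite !nth_mkseq // ?(ltnW lt_tN) //.
have lt_td := ltn_pmod t d_gt0.
have [lt_t1d | ge_t1d] := ltnP (t %% d).+1 d.
  have e_t1 : t.+1 = t %/ d * d + (t %% d).+1 by rewrite {1}(divn_eq t d) addnS.
  rewrite e_t1 divnMD_small // modnMD_small //.
  by apply: step_in; rewrite // -addnS -e_t1.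
have e_mod : t %% d = d.-1 by move: (t %% d) lt_td ge_t1d => i; lia.
have e_t1 : t.+1 = (t %/ d).+1 * d + 0.
  by rewrite addn0 mulSnr {1}(divn_eq t d) e_mod -addnS prednK.
rewrite e_t1 divnMD_small // modnMD_small // e_mod.
by apply: step_out; rewrite -(addn0 (_ * d)) -e_t1.
Qed.

Lemma ltn_block_index j d i K : j * d + i < K * d -> j < K.
Proof. by move/(leq_ltn_trans (leq_addr i _)); rewrite ltn_mul2r => /andP []. Qed.

Section RevDigits.
Variable k : nat.
Hypothesis k_gt0 : 0 < k.
Local Notation rev := (rev_digits k).

Lemma expk_gt0 n : 0 < k ^ n.
Proof. by rewrite expn_gt0 k_gt0. Qed.

Lemma rev_digits0 x : rev 0 x = 0.
Proof. by rewrite /rev_digits big_ord0. Qed.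

Lemma rev_digitsS l x : rev l.+1 x = rev l (x %/ k) + k ^ l * (x %% k).
Proof.
rewrite /rev_digits big_ord_recl /= addnC; congr (_ + _).
  apply: eq_bigr => i _; rewrite /digit /bump /= add1n expnS divnMA.
  by congr (_ * k ^ _); lia.
by rewrite /digit expn0 divn1 subn0 mulnC.
Qed.

Lemma rev_digits_lt l x : rev l x < k ^ l.
Proof.
elim: l x => [|l IHl] x; first by rewrite rev_digits0.
by rewrite rev_digitsS expnSr ltn_addM_digit // ltn_pmod.
Qed.

Lemma rev_digitsD a b x :
  rev (a + b) x = rev a (x %/ k ^ b) + k ^ a * rev b (x %% k ^ b).
Proof.
elim: b x => [|b IHb] x; first by rewrite addn0 rev_digits0 divn1 muln0 addn0.
rewrite addnS rev_digitsS IHb rev_digitsS -divnMA -expnS.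
rewrite modn_divl -expnSr modn_dvdm ?dvdn_exp // mulnDr expnD mulnA.
by rewrite addnA.
Qed.

Lemma rev_digitsK l x : x < k ^ l -> rev l (rev l x) = x.
Proof.
elim: l x => [|l IHl] x lt_x; first by rewrite rev_digits0; move: lt_x; case: x.
have lt_r := rev_digits_lt l (x %/ k).
have -> : rev l.+1 x = x %% k * k ^ l + rev l (x %/ k).
  by rewrite rev_digitsS addnC mulnC.
rewrite -(add1n l) rev_digitsD divnMD_small // modnMD_small // expn1 IHl; last first.
  by rewrite ltn_divLR // -expnSr.
rewrite rev_digitsS rev_digits0 expn0 mul1n modn_small ?ltn_pmod //.
by rewrite addnC mulnC -divn_eq.
Qed.

Lemma rev_digits_mid A B x :
  rev (A.+1 + B) x =
  rev A (x %/ k ^ B.+1) + k ^ A * (x %/ k ^ B %% k) + k ^ A.+1 * rev B (x %% k ^ B).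
Proof. by rewrite rev_digitsD rev_digitsS -divnMA -expnSr. Qed.

Lemma rev_digits_divX A B x : rev (A + B) x %/ k ^ A = rev B (x %% k ^ B).
Proof. by rewrite rev_digitsD addnC mulnC divnMD_small // rev_digits_lt. Qed.

Lemma rev_digits_inj l : {in gtn (k ^ l) &, injective (rev l)}.
Proof. exact/can_in_inj/rev_digitsK. Qed.

Lemma rev_digits_mid_mono A B x x' :
  x %/ k ^ B.+1 = x' %/ k ^ B.+1 -> x %% k ^ B = x' %% k ^ B -> x < x' ->
  rev (A.+1 + B) x < rev (A.+1 + B) x'.
Proof.
move=> e_hi e_lo lt_xx'.
have lt_q : x %/ k ^ B < x' %/ k ^ B.
  by rewrite -(ltn_pmul2r (expk_gt0 B)) -(ltn_add2r (x %% k ^ B)) {2}e_lo -!divn_eq.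
have lt_mid : x %/ k ^ B %% k < x' %/ k ^ B %% k.
  by rewrite -(ltn_add2l (x %/ k ^ B.+1 * k)) {2}e_hi expnSr 2!divnMA -!(divn_eq _ k).
by rewrite !rev_digits_mid e_hi e_lo ltn_add2r ltn_add2l ltn_pmul2l ?expk_gt0.
Qed.

Definition inv_pair l x y := (x < y) && (rev l y < rev l x).

Definition potential B x := x %/ k ^ B.+1 + k ^ B - rev B (x %% k ^ B).

Lemma potential_bounds A B x :
  x < k ^ (A.+1 + B) -> 0 < potential B x < k ^ A + k ^ B.
Proof.
move=> lt_x; have lt_lo := rev_digits_lt B (x %% k ^ B).
have lt_hi : x %/ k ^ B.+1 < k ^ A by rewrite ltn_divLR ?expk_gt0 // -expnD addnS.
rewrite /potential; move: lt_lo lt_hi.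
move: (x %/ k ^ B.+1) (rev B (x %% k ^ B)) (k ^ A) (k ^ B) => hi lo KA KB; lia.
Qed.

Lemma potential_increasing A B x x' :
  inv_pair (A.+1 + B) x x' -> potential B x < potential B x'.
Proof.
case/andP=> lt_xx' lt_rev.
have le_hi : x %/ k ^ B.+1 <= x' %/ k ^ B.+1 by exact: leq_div2r _ (ltnW _).
have le_lo : rev B (x' %% k ^ B) <= rev B (x %% k ^ B).
  by rewrite -!(rev_digits_divX A.+1); exact: leq_div2r _ (ltnW _).
have not_both : ~ (x %/ k ^ B.+1 = x' %/ k ^ B.+1 /\
                   rev B (x %% k ^ B) = rev B (x' %% k ^ B)).
  case=> e_hi /rev_digits_inj e_lo.
  have lo_lt y : y %% k ^ B \in gtn (k ^ B) := ltn_pmod y (expk_gt0 B).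
  have := rev_digits_mid_mono A e_hi (e_lo (lo_lt x) (lo_lt x')) lt_xx'.
  by rewrite ltnNge (ltnW lt_rev).
have lt_lo := rev_digits_lt B (x %% k ^ B); have lt_lo' := rev_digits_lt B (x' %% k ^ B).
rewrite /potential; move: le_hi le_lo not_both lt_lo lt_lo'.
move: (x %/ k ^ B.+1) (x' %/ k ^ B.+1) (rev B (x %% k ^ B)) (rev B (x' %% k ^ B)) (k ^ B).
move=> h h' r r' K; lia.
Qed.

Lemma dec_subseq_size_le A B t :
  is_dec_subseq t (Zperm k (A.+1 + B)) -> size t <= k ^ A + k ^ B - 1.
Proof.
case/andP=> /subseqP [m _ ->]; rewrite /Zperm -map_mask sorted_map size_map.
set xs := mask m _ => dec_xs.
have lt_xs : sorted ltn xs by apply/sorted_mask/iota_ltn_sorted/ltn_trans.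
have pot_xs : sorted ltn (map (potential B) xs).
  have : sorted [rel x y | (x < y) && (rev (A.+1 + B) y < rev (A.+1 + B) x)] xs.
    by rewrite sorted_relI lt_xs.
  by rewrite sorted_map; apply: sub_sorted => x y /potential_increasing.
have pot_range : {subset map (potential B) xs <= iota 1 (k ^ A + k ^ B - 1)}.
  move=> _ /mapP [x /mem_mask x_in ->]; rewrite mem_iota.
  have lt_x : x < k ^ (A.+1 + B) by move: x_in; rewrite mem_iota.
  by have := potential_bounds lt_x; move: (potential B x) => p; lia.
rewrite -(size_map (potential B)) -[X in _ <= X](size_iota 1).
exact: uniq_leq_size (sorted_uniq ltn_trans ltnn pot_xs) pot_range.
Qed.

(* The position whose reversal has high part [q], middle digit [c] and low
   part [rev A p]; see [rev_digits_pos]. *)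
Definition pos B p c q := (p * k + c) * k ^ B + rev B q.

Lemma rev_digits_pos A B p c q : c < k -> q < k ^ B ->
  rev (A.+1 + B) (pos B p c q) = rev A p + k ^ A * c + k ^ A.+1 * q.
Proof.
move=> lt_c lt_q; have lt_rq := rev_digits_lt B q.
have pos_divX : pos B p c q %/ k ^ B = p * k + c by rewrite divnMD_small.
rewrite rev_digits_mid expnSr divnMA pos_divX divnMD_small // modnMD_small //.
by rewrite modnMD_small // rev_digitsK.
Qed.

Lemma pos_lt A B p c q : p < k ^ A -> c < k -> pos B p c q < k ^ (A.+1 + B).
Proof.
move=> lt_p lt_c; rewrite /pos addnC mulnC expnD [k ^ A.+1 * _]mulnC.
by rewrite ltn_addM_digit ?rev_digits_lt // addnC mulnC expnS ltn_addM_digit.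
Qed.

Lemma pos_ltn B p c q p' c' q' : p * k + c < p' * k + c' -> pos B p c q < pos B p' c' q'.
Proof.
move=> lt_pc; apply: (@leq_trans ((p * k + c).+1 * k ^ B)).
  by rewrite /pos mulSn [_ + rev B q]addnC ltn_add2r rev_digits_lt.
by rewrite /pos (leq_trans _ (leq_addr _ _)) // leq_mul2r lt_pc orbT.
Qed.

Lemma inv_pair_mid A B p c c' q : c' < c -> c < k -> q < k ^ B ->
  inv_pair (A.+1 + B) (pos B p c q) (pos B p.+1 c' q).
Proof.
move=> lt_c' lt_c lt_q; apply/andP; split.
  by apply: pos_ltn; rewrite mulSn; lia.
rewrite !rev_digits_pos ?(ltn_trans lt_c') // ltn_add2r.
have lt_rp := rev_digits_lt A p.+1.
have : k ^ A * c'.+1 <= k ^ A * c by rewrite leq_mul2l lt_c' orbT.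
rewrite mulnS; move: (k ^ A * c') (k ^ A * c) (k ^ A) (rev A p.+1) (rev A p) lt_rp.
by move=> a b K r r'; lia.
Qed.

Lemma inv_pair_low A B p c c' q : c < c' -> c' < k -> 0 < q -> q < k ^ B ->
  inv_pair (A.+1 + B) (pos B p c q) (pos B p c' q.-1).
Proof.
move=> lt_cc' lt_c' q_gt0 lt_q; apply/andP; split; first by rewrite pos_ltn // ltn_add2l.
rewrite !rev_digits_pos ?(ltn_trans lt_cc') ?(leq_ltn_trans (leq_pred q)) //.
have lt_c'k : k ^ A * c' < k ^ A.+1 by rewrite expnSr ltn_pmul2l ?expk_gt0.
have -> : k ^ A.+1 * q = k ^ A.+1 * q.-1 + k ^ A.+1 by rewrite -mulnSr prednK.
have := rev_digits_lt A p.
move: (k ^ A * c') (k ^ A * c) (k ^ A.+1) (k ^ A.+1 * q.-1) (rev A p) lt_c'k.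
by move=> a b K z r; lia.
Qed.

Lemma dec_subseq_of_chain l xs :
  sorted (inv_pair l) xs -> all (gtn (k ^ l)) xs ->
  is_dec_subseq [seq (rev l x).+1 | x <- xs] (Zperm k l).
Proof.
move=> inv_xs lt_xs; apply/andP; split.
  apply/map_subseq/(sorted_subset_subseq ltn_trans ltnn _ (iota_ltn_sorted 0 _)).
    by apply: sub_sorted inv_xs => x y /andP [].
  by move=> x x_in; rewrite mem_iota /=; apply: (allP lt_xs).
by rewrite sorted_map; apply: sub_sorted inv_xs => x y /andP [].
Qed.

Section Chains.
Hypothesis k_gt1 : 1 < k.

Lemma rev_digits_carry A p : p %% k = k.-1 -> rev A.+1 p.+1 < rev A.+1 p.
Proof.
move=> p_mod.
have p1_mod : p.+1 %% k = 0 by rewrite -addn1 -modnDml p_mod addn1 prednK // modnn.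
rewrite !rev_digitsS p1_mod muln0 addn0 p_mod (leq_trans (rev_digits_lt _ _)) //.
by rewrite (leq_trans _ (leq_addl _ _)) // leq_pmulr // -ltnS prednK.
Qed.

Lemma inv_pair_carry A B p c q : p %% k = k.-1 -> c < k -> q < k ^ B ->
  inv_pair (A.+2 + B) (pos B p c q) (pos B p.+1 c q).
Proof.
move=> p_mod lt_c lt_q; apply/andP; split.
  by apply: pos_ltn; rewrite mulSn; lia.
by rewrite !rev_digits_pos // -!addnA ltn_add2r rev_digits_carry.
Qed.

(* Blocks [(j, 1, K-1-j), (j+1, 0, K-1-j)] of coordinates [(p, c, q)], with
   [K = k ^ m]; the last block is cut after its first element. *)
Lemma dec_subseq_odd_witness m :
  exists t, is_dec_subseq t (Zperm k (m.+1 + m)) /\ size t = k ^ m + k ^ m - 1.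
Proof.
set K := k ^ m; have K_gt0 : 0 < K := expk_gt0 m.
pose G j i := if i == 0 then pos m j 1 (K.-1 - j) else pos m j.+1 0 (K.-1 - j).
exists [seq (rev (m.+1 + m) x).+1 | x <- mkseq (fun t => G (t %/ 2) (t %% 2)) (K + K - 1)].
rewrite size_map size_mkseq; split => //; apply: dec_subseq_of_chain.
  apply: sorted_mkseq_blocks => // [j i lt_i2 _ | j lt_jN].
    have -> : i = 0 by lia.
    by apply: inv_pair_mid => //; lia.
  rewrite /G /= subnS; apply: inv_pair_low => //; lia.
apply/allP => y /mapP [t + ->]; rewrite mem_iota /= => lt_tN.
by rewrite /G; case: eqP => t_mod; apply: pos_lt; lia.
Qed.

(* Blocks [(k j + i, k-1-i, K-1-j)] for [i < k], followed by
   [(k j + k-1, k-1, K-2-j)], with [K = k ^ B]; the last block is cut before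
   its last element. Passing to the next block is a carry in [p]. *)
Lemma dec_subseq_even_witness B :
  exists t, is_dec_subseq t (Zperm k (B.+2 + B)) /\ size t = k ^ B.+1 + k ^ B - 1.
Proof.
set K := k ^ B; have K_gt0 : 0 < K := expk_gt0 B.
pose G j i := if i < k then pos B (k * j + i) (k.-1 - i) (K.-1 - j)
              else pos B (k * j + k.-1) k.-1 (K.-1 - j).-1.
exists [seq (rev (B.+2 + B) x).+1 |
        x <- mkseq (fun t => G (t %/ k.+1) (t %% k.+1)) (K * k.+1 - 1)].
rewrite size_map size_mkseq; split; last by rewrite expnSr mulnSr.
apply: dec_subseq_of_chain.
  apply: sorted_mkseq_blocks => // [j i lt_ik1 lt_N | j lt_N].
    rewrite /G ltnS in lt_ik1 *; rewrite lt_ik1.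
    have [lt_i1k | ge_i1k] := ltnP i.+1 k.
      by rewrite addnS; apply: inv_pair_mid => //; lia.
    have e_i : i = k.-1 by lia.
    have lt_j1K : j.+1 < K.
      by apply: (@ltn_block_index _ k.+1 0); move: lt_N; rewrite e_i; lia.
    by rewrite e_i subnn; apply: inv_pair_low; lia.
  have lt_j1K : j.+1 < K by apply: (@ltn_block_index _ k.+1 0); lia.
  rewrite /G /= ltnn k_gt0 addn0 subn0 mulnS subnS.
  have -> : k + k * j = (k * j + k.-1).+1 by lia.
  apply: inv_pair_carry => //; try lia.
  by rewrite mulnC modnMD_small // ltn_predL.
apply/allP => y /mapP [t + ->]; rewrite mem_iota /= => lt_tN.
have lt_j : t %/ k.+1 < K.
  by apply: (@ltn_block_index _ k.+1 (t %% k.+1)); rewrite -divn_eq; lia.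
have lt_p i : i < k -> k * (t %/ k.+1) + i < k ^ B.+1.
  by move=> lt_ik; rewrite addnC expnS ltn_addM_digit.
by rewrite /G; case: (ltnP (t %% k.+1) k) => lt_i; apply: pos_lt; rewrite ?lt_p //; lia.
Qed.

Lemma lds_length_split A B :
  B <= A <= B.+1 -> lds_length (Zperm k (A.+1 + B)) (k ^ A + k ^ B - 1).
Proof.
move=> le_BAB; split; last exact: dec_subseq_size_le.
have [->|->] : A = B \/ A = B.+1 by lia.
  exact: dec_subseq_odd_witness.
exact: dec_subseq_even_witness.
Qed.

End Chains.

End RevDigits.

Theorem theorem7p3 (k l : nat) (hk : 2 <= k) (hl : 1 <= l) :
  lds_length (Zperm k l)
    (if ~~ odd l then (k + 1) * k ^ (l./2 - 1) - 1
     else 2 * k ^ ((l - 1)./2) - 1).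
Proof.
have k_gt0 : 0 < k by apply: ltnW.
have l_halves := odd_double_half l.
case: ifP => [l_even | /negbFE l_odd].
  set B := l./2 - 1.
  have -> : l = B.+2 + B by move: l_halves; rewrite (negbTE l_even) -addnn; lia.
  rewrite mulnDl mul1n -expnS; apply: lds_length_split => //; lia.
set m := (l - 1)./2.
have -> : l = m.+1 + m.
  by move: l_halves; rewrite /m l_odd -addnn -!divn2; lia.
by rewrite mul2n -addnn; apply: lds_length_split => //; lia.
Qed.
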